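(* Let $X$ be a group and $B$ a left $X$-group. The assignment $[q]\mapsto[(q\circ\iota_X)^{-1}]$, where $(q\circ\iota_X)^{-1}(x)=(q(\iota_X(x)))^{-1}$, is a well-defined isomorphism of pointed sets $$\mathsf{Desc}^1(\mathsf T^l_{\iota_B},((B,m_B),p_B))\cong\mathcal H^1(X,B),$$ and there is an isomorphism of groups $\mathsf{Desc}^0(\mathsf T^l_{\iota_B},((B,m_B),p_B))\cong\mathcal H^0(X,B)$. In particular these coincide with Serre's non-abelian cohomology $H^1(X,B)$ and $H^0(X,B)$.
   Context: A left $X$-group is a group $B$ with $\star:X\times B\to B$ satisfying $1_X\star b=b$, $(x_1x_2)\star b=x_1\star(x_2\star b)$, $x\star(b_1b_2)=(x\star b_1)(x\star b_2)$. $B\rtimes X$ is the group on $B\times X$ with $(b_1,x_1)(b_2,x_2)=(b_1(x_1\star b_2),x_1x_2)$; $\iota_B(b)=(b,1_X)$, $\iota_X(x)=(1_B,x)$, $p_B(b,x)=b$. $\mathcal H^0(X,B)=\{b: x\star b=b\ \forall x\}$; a 1-cocycle is $r:X\to B$ with $r(x_1x_2)=r(x_1)(x_1\star r(x_2))$; $r\sim r'$ iff $r(x)(x\star b_0)=b_0r'(x)$ for some $b_0\in B$ and all $x$; $\mathcal H^1(X,B)$ is the set of classes, pointed by the class of the trivial cocycle. $\mathcal Z^1(\mathsf T^l_{\iota_B},(B,m_B))$ is the set of maps $q:B\rtimes X\to B$ with (ZL1) $q(1)=1_B$, (ZL2) $q(\iota_B(b)a)=b\,q(a)$, (ZL3)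 $q(aa')=q(a\,\iota_B(q(a')))$ (algebra structures on the left $B$-set $B$ for the monad $(B\rtimes X)\otimes_B-$), pointed by $p_B$; $\mathsf{Desc}^1(\mathsf T^l_{\iota_B},((B,m_B),p_B))$ is its quotient by $q\sim q'$ iff $q(a)b_0=q'(a\,\iota_B(b_0))$ for some $b_0\in B$ and all $a$, pointed by $[p_B]$; $\mathsf{Desc}^0$ is the automorphism group of the algebra $((B,m_B),p_B)$, i.e. the group of maps $b\mapsto bb_0$ with $p_B(a\,\iota_B(b_0))=p_B(a)b_0$ for all $a$, under composition. *)

Set Implicit Arguments.

Record Group := {
  gcar :> Type;
  gmul : gcar -> gcar -> gcar;
  gone : gcar;
  ginv : gcar -> gcar;
  gmulA : forall a b c, gmul a (gmul b c) = gmul (gmul a b) c;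
  gmul1l : forall a, gmul gone a = a;
  gmul1r : forall a, gmul a gone = a;
  gmulVl : forall a, gmul (ginv a) a = gone;
  gmulVr : forall a, gmul a (ginv a) = gone }.

Arguments gmul {g} _ _.
Arguments gone {g}.
Arguments ginv {g} _.

Record XGroup (X : Group) := {
  xgrp :> Group;
  act : X -> xgrp -> xgrp;
  act_one : forall b, act gone b = b;
  act_mul : forall x1 x2 b, act (gmul x1 x2) b = act x1 (act x2 b);
  act_hom : forall x b1 b2, act x (gmul b1 b2) = gmul (act x b1) (act x b2) }.

Arguments act {X} _ _ _.

Section Defs.
Variables (X : Group) (B : XGroup X).

Definition sd_mul (a1 a2 : B * X) : B * X :=
  (gmul (fst a1) (act B (snd a1) (fst a2)), gmul (snd a1) (snd a2)).
Definition sd_one : B * X := (gone, gone).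
Definition iotaB (b : B) : B * X := (b, gone).
Definition iotaX (x : X) : B * X := (gone, x).
Definition pB (a : B * X) : B := fst a.

Definition H0 (b : B) : Prop := forall x : X, act B x b = b.

Definition cocycle (r : X -> B) : Prop :=
  forall x1 x2, r (gmul x1 x2) = gmul (r x1) (act B x1 (r x2)).
Definition cohomologous (r r' : X -> B) : Prop :=
  exists b0 : B, forall x, gmul (r x) (act B x b0) = gmul b0 (r' x).
Definition trivial_cocycle : X -> B := fun _ => gone.

(* Z^1(T^l_{iota_B}, (B, m_B)) : algebra structures, and the relation defining Desc^1 *)
Definition Zalg (q : B * X -> B) : Prop :=
  q sd_one = gone /\
  (forall b a, q (sd_mul (iotaB b) a) = gmul b (q a)) /\
  (forall a a', q (sd_mul a a') = q (sd_mul a (iotaB (q a')))).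
Definition desc_rel (q q' : B * X -> B) : Prop :=
  exists b0 : B, forall a, gmul (q a) b0 = q' (sd_mul a (iotaB b0)).

(* Desc^0: maps b |-> b b0 that are algebra automorphisms of ((B,m_B),p_B) *)
Definition Desc0 (f : B -> B) : Prop :=
  exists b0 : B, (forall b, f b = gmul b b0) /\
                 (forall a, pB (sd_mul a (iotaB b0)) = gmul (pB a) b0).

Definition cocycle_of (q : B * X -> B) : X -> B := fun x => ginv (q (iotaX x)).

End Defs.
Arguments Zalg {X B} q.
Arguments desc_rel {X B} q q'.
Arguments cocycle {X B} r.
Arguments cohomologous {X B} r r'.
Arguments Desc0 {X B} f.
Arguments H0 {X B} b.
Arguments cocycle_of {X B} q _.
Arguments pB {X B} a.
Arguments sd_mul {X B} a1 a2.
Arguments iotaB {X B} b.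
Arguments iotaX {X B} x.
Arguments sd_one {X B}.

(* An algebra [q] on the left [B]-set [B] is determined by its restriction to
   [iota_X]: (ZL2) forces [q (b, x) = b * q (1, x)], and (ZL3) applied to
   [(1, x) (1, x')] says exactly that [x |-> q (1, x)^-1] is a 1-cocycle.
   Conversely every cocycle [r] gives the algebra [(b, x) |-> b * r(x)^-1], and
   the relation defining [Desc^1] restricted to [iota_X] is cohomology of the
   inverted cocycles.  An automorphism [b |-> b * b0] of [((B, m_B), p_B)] is
   the same as a [b0] fixed by [X]; composition reverses the order of
   right translations, hence the inverse in the isomorphism with [H^0]. *)

From Stdlib Require Import FunctionalExtensionality.

Arguments gmulA {g} a b c.
Arguments gmul1l {g} a.
Arguments gmul1r {g} a.
Arguments gmulVl {g} a.
Arguments gmulVr {g} a.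

Section GroupTheory.
Context {G : Group}.
Implicit Types a b c d : G.

Lemma gmulI a b c : gmul a b = gmul a c -> b = c.
Proof.
  intro H. rewrite <- (gmul1l b), <- (gmul1l c), <- (gmulVl a), <- !gmulA, H.
  reflexivity.
Qed.

Lemma ginv_unique a b : gmul a b = gone -> b = ginv a.
Proof. intro H. apply (gmulI a). rewrite H, gmulVr. reflexivity. Qed.

Lemma ginvM a b : ginv (gmul a b) = gmul (ginv b) (ginv a).
Proof.
  symmetry. apply ginv_unique.
  rewrite <- gmulA, (gmulA b), gmulVr, gmul1l, gmulVr. reflexivity.
Qed.

Lemma ginvK a : ginv (ginv a) = a.
Proof. symmetry. apply ginv_unique, gmulVl. Qed.

Lemma ginv1 : ginv (@gone G) = gone.
Proof. symmetry. apply ginv_unique, gmul1l. Qed.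

Lemma gmul_eq_transpose a b c d :
  gmul a b = gmul c d <-> gmul (ginv a) c = gmul b (ginv d).
Proof.
  split; intro H.
  - rewrite <- (gmul1r c), <- (gmulVr d), (gmulA c d), <- H, <- (gmulA a b),
      (gmulA (ginv a) a), gmulVl, gmul1l.
    reflexivity.
  - rewrite <- (gmul1l (gmul c d)), <- (gmulVr a), <- (gmulA a (ginv a)),
      (gmulA (ginv a) c d), H, <- (gmulA b), gmulVl, gmul1r.
    reflexivity.
Qed.

End GroupTheory.

Section XGroupTheory.
Context {X : Group} {B : XGroup X}.
Implicit Types (x : X) (b : B).

Lemma act1 x : act B x gone = gone.
Proof. apply (gmulI (act B x gone)). rewrite <- act_hom, !gmul1r. reflexivity. Qed.

Lemma actV x b : act B x (ginv b) = ginv (act B x b).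
Proof. apply ginv_unique. rewrite <- act_hom, gmulVr, act1. reflexivity. Qed.

Lemma H0V {b} : H0 b -> H0 (ginv b).
Proof. intros Hb x. rewrite actV, Hb. reflexivity. Qed.

End XGroupTheory.

Section DescentOne.
Context {X : Group} {B : XGroup X}.
Implicit Types (q : B * X -> B) (r : X -> B).

Lemma Zalg_pB : Zalg (@pB X B).
Proof.
  split; [|split].
  - reflexivity.
  - intros b [b' x]. unfold pB, sd_mul, iotaB; simpl. rewrite act_one. reflexivity.
  - intros [b x] [b' x']. reflexivity.
Qed.

Lemma Zalg_split {q} : Zalg q -> forall b x, q (b, x) = gmul b (q (gone, x)).
Proof.
  intros [_ [Hmul _]] b x. rewrite <- Hmul. unfold sd_mul, iotaB; simpl.
  rewrite act_one, gmul1r, gmul1l. reflexivity.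
Qed.

Lemma Zalg_iotaX_mul {q} : Zalg q -> forall x x',
  q (gone, gmul x x') = gmul (act B x (q (gone, x'))) (q (gone, x)).
Proof.
  intros Hq x x'. pose proof Hq as [_ [_ Hassoc]].
  specialize (Hassoc (gone, x) (gone, x')). unfold sd_mul, iotaB in Hassoc; simpl in Hassoc.
  rewrite act1, !gmul1l, gmul1r in Hassoc.
  rewrite Hassoc, (Zalg_split Hq). reflexivity.
Qed.

Lemma cocycle_of_Zalg q : Zalg q -> cocycle (cocycle_of q).
Proof.
  intros Hq x x'. unfold cocycle_of, iotaX.
  rewrite (Zalg_iotaX_mul Hq), ginvM, actV. reflexivity.
Qed.

Lemma desc_rel_cohomologous q q' : Zalg q -> Zalg q' ->
  desc_rel q q' <-> cohomologous (cocycle_of q) (cocycle_of q').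
Proof.
  intros Hq Hq'. unfold desc_rel, cohomologous, cocycle_of, iotaX. split.
  - intros [b0 H]. exists b0. intro x. apply gmul_eq_transpose.
    specialize (H (gone, x)). unfold sd_mul, iotaB in H; simpl in H.
    rewrite gmul1l, gmul1r, (Zalg_split Hq') in H.
    rewrite !ginvK, H. reflexivity.
  - intros [b0 H]. exists b0. intros [b x]. unfold sd_mul, iotaB; simpl.
    specialize (H x). apply gmul_eq_transpose in H.
    rewrite gmul1r, (Zalg_split Hq), (Zalg_split Hq' (gmul b _)), <- gmulA, H, gmulA.
    reflexivity.
Qed.

Lemma cohomologous_pointwise r r' : (forall x, r x = r' x) -> cohomologous r r'.
Proof. intro E. exists gone. intro x. rewrite act1, gmul1l, gmul1r, E. reflexivity. Qed.

Lemma cocycle1 {r} : cocycle r -> r gone = gone.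
Proof.
  intro Hr. apply (gmulI (r gone)). rewrite gmul1r.
  pose proof (Hr gone gone) as E. rewrite gmul1l, act_one in E.
  symmetry. exact E.
Qed.

Definition Zalg_of_cocycle r (a : B * X) : B := gmul (fst a) (ginv (r (snd a))).

Lemma Zalg_of_cocycleP {r} : cocycle r -> Zalg (Zalg_of_cocycle r).
Proof.
  intro Hr. unfold Zalg_of_cocycle. split; [|split].
  - simpl. rewrite (cocycle1 Hr), ginv1, gmul1l. reflexivity.
  - intros b [b' x]. unfold sd_mul, iotaB; simpl. rewrite act_one, gmul1l, gmulA.
    reflexivity.
  - intros [b x] [b' x']. unfold sd_mul, iotaB; simpl.
    rewrite gmul1r, Hr, ginvM, act_hom, actV, !gmulA. reflexivity.
Qed.

Lemma cocycle_of_Zalg_of_cocycle r x : cocycle_of (Zalg_of_cocycle r) x = r x.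
Proof. unfold cocycle_of, Zalg_of_cocycle, iotaX; simpl. rewrite gmul1l, ginvK. reflexivity. Qed.

End DescentOne.

Section DescentZero.
Context {X : Group} {B : XGroup X}.
Implicit Types (f : B -> B) (b : B).

Lemma Desc0P f : Desc0 f <-> H0 (f gone) /\ forall b, f b = gmul b (f gone).
Proof.
  split.
  - intros [b0 [Hf Hp]].
    assert (Hb0 : f gone = b0) by (rewrite Hf; apply gmul1l).
    rewrite Hb0. split; [|exact Hf].
    intro x. specialize (Hp (gone, x)). unfold pB, sd_mul, iotaB in Hp; simpl in Hp.
    rewrite !gmul1l in Hp. exact Hp.
  - intros [Hfix Hf]. exists (f gone). split; [exact Hf|].
    intros [b x]. unfold pB, sd_mul, iotaB; simpl. rewrite Hfix. reflexivity.
Qed.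

Lemma Desc0_translation {b} : H0 b -> Desc0 (fun c => gmul c b).
Proof.
  intro Hb. apply Desc0P. simpl. rewrite gmul1l. split; [exact Hb | reflexivity].
Qed.

End DescentZero.

Theorem theorem5p6 (X : Group) (B : XGroup X) :
  (* [q] |-> [(q o iota_X)^{-1}] : Desc^1 -> H^1 is a well-defined isomorphism of pointed sets *)
  ((forall q : B * X -> B, Zalg q -> cocycle (cocycle_of q)) /\
   (forall q q' : B * X -> B, Zalg q -> Zalg q' ->
      (desc_rel q q' <-> cohomologous (cocycle_of q) (cocycle_of q'))) /\
   (forall r : X -> B, cocycle r -> exists q : B * X -> B, Zalg q /\ cohomologous r (cocycle_of q)) /\
   Zalg (@pB X B) /\
   cohomologous (cocycle_of (@pB X B)) (@trivial_cocycle X B)) /\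
  (* Desc^0 (under composition) is isomorphic as a group to H^0(X,B) *)
  (exists phi : (B -> B) -> B,
     (forall f : B -> B, Desc0 f -> H0 (phi f)) /\
     (forall f g : B -> B, Desc0 f -> Desc0 g -> phi (fun b => f (g b)) = gmul (phi f) (phi g)) /\
     (forall f g : B -> B, Desc0 f -> Desc0 g -> phi f = phi g -> f = g) /\
     (forall b : B, H0 b -> exists f : B -> B, Desc0 f /\ phi f = b)).
Proof.
  split; [split; [|split; [|split; [|split]]]|].
  - apply cocycle_of_Zalg.
  - apply desc_rel_cohomologous.
  - intros r Hr. exists (Zalg_of_cocycle r). split; [exact (Zalg_of_cocycleP Hr)|].
    apply cohomologous_pointwise. intro x. symmetry. apply cocycle_of_Zalg_of_cocycle.
  - apply Zalg_pB.
  - apply cohomologous_pointwise. intro x. apply ginv1.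
  - exists (fun f => ginv (f gone)). split; [|split; [|split]].
    + intros f Hf. apply H0V, Desc0P, Hf.
    + intros f g Hf _. apply Desc0P in Hf as [_ Hf]. rewrite Hf, ginvM. reflexivity.
    + intros f g Hf Hg E. apply Desc0P in Hf as [_ Hf]. apply Desc0P in Hg as [_ Hg].
      apply functional_extensionality. intro b.
      rewrite Hf, Hg, <- (ginvK (f gone)), E, ginvK. reflexivity.
    + intros b Hb. exists (fun c => gmul c (ginv b)).
      split; [exact (Desc0_translation (H0V Hb))|]. simpl. rewrite gmul1l, ginvK.
      reflexivity.
Qed.
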